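(* Let $x_0>0$, $y_0>0$ with $x_0\neq y_0$. Then for every $T>0$ there exists a solution $(x,y)\in C^1([0,T])^2$ of the system \[ \dot x(t)=x(t)-\max_{s\in[0,t]}y(s),\qquad \dot y(t)=y(t)-\max_{s\in[0,t]}x(s),\quad t\in[0,T],\qquad x(0)=x_0,\ y(0)=y_0. \] *)

From Stdlib Require Import Reals.
From Coquelicot Require Import Coquelicot.
Open Scope R_scope.

Definition Icc (a b : R) (t : R) : Prop := a <= t <= b.

(* f has derivative l at t relative to the set D (one-sided at the ends of
   an interval): (f s - f t)/(s - t) -> l as s -> t, s in D, s <> t. *)
Definition has_deriv_within (D : R -> Prop) (f : R -> R) (t l : R) : Prop :=
  filterlim (fun s => (f s - f t) / (s - t))
    (within (fun s => D s /\ s <> t) (locally t)) (locally l).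

Definition C1_on (T : R) (f f' : R -> R) : Prop :=
  (forall t, Icc 0 T t -> has_deriv_within (Icc 0 T) f t (f' t)) /\
  (forall t, Icc 0 T t ->
     filterlim f' (within (Icc 0 T) (locally t)) (locally (f' t))).

(* running maximum max_{s in [0,t]} f s, as the supremum of the values
   (which is attained, i.e. a maximum, for continuous f). *)
Definition runmax (f : R -> R) (t : R) : R :=
  real (Lub_Rbar (fun v => exists s, 0 <= s <= t /\ v = f s)).

(* For x0 >= y0 the solution is explicit: with d = x0 - y0,
   x t = y0 + d e^t and y t = y0 - d t e^t.  Then x is nondecreasing and y is
   nonincreasing on [0, T], so max_[0,t] y = y0 and max_[0,t] x = x t, and the
   system reduces to x' = x - y0 and y' = y - x, which these functions satisfy.
   The case x0 < y0 follows since the system is symmetric in x and y. *)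
From Stdlib Require Import Reals Lra.
From Coquelicot Require Import Coquelicot.
Open Scope R_scope.

Lemma has_deriv_within_is_derive (D : R -> Prop) (f : R -> R) (t l : R) :
  is_derive f t l -> has_deriv_within D f t l.
Proof.
  intros Hf. apply is_derive_Reals in Hf. apply filterlim_locally. intros eps.
  destruct (Hf eps (cond_pos eps)) as [del Hdel].
  exists del. intros s Hs [_ Hst].
  assert (Hh : s - t <> 0) by lra.
  specialize (Hdel (s - t) Hh Hs).
  assert (Hs' : @eq R (t + (s - t)) s) by ring.
  rewrite Hs' in Hdel. exact Hdel.
Qed.

Lemma filterlim_within_continuous (D : R -> Prop) (f : R -> R) (t : R) :
  continuous f t -> filterlim f (within D (locally t)) (locally (f t)).
Proof.
  intros Hf. eapply filterlim_filter_le_1; [|exact Hf].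
  intros P HP. unfold within. eapply filter_imp; [|exact HP]. auto.
Qed.

Lemma C1_on_is_derive (T : R) (f f' : R -> R) :
  (forall t, is_derive f t (f' t)) -> (forall t, ex_derive f' t) -> C1_on T f f'.
Proof.
  intros Hf Hf'. split; intros t _.
  - apply has_deriv_within_is_derive, Hf.
  - apply filterlim_within_continuous. exact (ex_derive_continuous f' t (Hf' t)).
Qed.

Lemma runmax_attained (f : R -> R) (t u : R) :
  0 <= u <= t -> (forall s, 0 <= s <= t -> f s <= f u) -> runmax f t = f u.
Proof.
  intros Hu Hmax. unfold runmax.
  rewrite (is_lub_Rbar_unique _ (Finite (f u))); [reflexivity|].
  split.
  - intros v [s [Hs ->]]. apply Hmax, Hs.
  - intros m Hm. apply Hm. exists u. auto.
Qed.

Lemma runmax_nondecreasing (f : R -> R) (t : R) :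
  0 <= t -> (forall s u, 0 <= s <= u -> f s <= f u) -> runmax f t = f t.
Proof.
  intros Ht Hf. apply runmax_attained; [lra|]. intros s Hs. apply Hf, Hs.
Qed.

Lemma runmax_nonincreasing (f : R -> R) (t : R) :
  0 <= t -> (forall s u, 0 <= s <= u -> f u <= f s) -> runmax f t = f 0.
Proof.
  intros Ht Hf. apply runmax_attained; [lra|]. intros s Hs. apply Hf. lra.
Qed.

Lemma exp_le_exp_of_le (s u : R) : s <= u -> exp s <= exp u.
Proof.
  intros [Hsu | ->]; [left; apply exp_increasing, Hsu | right; reflexivity].
Qed.

Lemma mult_exp_nondecreasing (s u : R) : 0 <= s <= u -> s * exp s <= u * exp u.
Proof.
  intros Hsu. apply Rmult_le_compat; [lra | left; apply exp_pos | lra |].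
  apply exp_le_exp_of_le. lra.
Qed.

Definition is_solution (T : R) (x x' y y' : R -> R) (x0 y0 : R) : Prop :=
  C1_on T x x' /\ C1_on T y y' /\
  (forall t, 0 <= t <= T ->
     x' t = x t - runmax y t /\ y' t = y t - runmax x t) /\
  x 0 = x0 /\ y 0 = y0.

Lemma is_solution_swap (T : R) (x x' y y' : R -> R) (x0 y0 : R) :
  is_solution T x x' y y' x0 y0 -> is_solution T y y' x x' y0 x0.
Proof.
  intros (Hx & Hy & Hsys & Hx0 & Hy0).
  split; [exact Hy|split; [exact Hx|split; [|split; assumption]]].
  intros t Ht. destruct (Hsys t Ht). split; assumption.
Qed.

Section ExplicitSolution.

Variables a b : R.
Hypothesis hba : b <= a.

Let d := a - b.

Definition sol_x (t : R) : R := b + d * exp t.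
Definition sol_x' (t : R) : R := d * exp t.
Definition sol_y (t : R) : R := b - d * (t * exp t).
Definition sol_y' (t : R) : R := - (d * (1 + t) * exp t).

Lemma runmax_sol_x (t : R) : 0 <= t -> runmax sol_x t = sol_x t.
Proof.
  intros Ht. apply runmax_nondecreasing; [exact Ht|]. intros s u Hsu.
  unfold sol_x. assert (exp s <= exp u) by (apply exp_le_exp_of_le; lra).
  assert (0 <= d) by (unfold d; lra). nra.
Qed.

Lemma runmax_sol_y (t : R) : 0 <= t -> runmax sol_y t = b.
Proof.
  intros Ht. replace b with (sol_y 0) by (unfold sol_y; ring).
  apply runmax_nonincreasing; [exact Ht|]. intros s u Hsu.
  unfold sol_y. pose proof (mult_exp_nondecreasing s u Hsu).
  assert (0 <= d) by (unfold d; lra). nra.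
Qed.

Lemma is_solution_explicit (T : R) :
  is_solution T sol_x sol_x' sol_y sol_y' a b.
Proof.
  split; [|split; [|split; [|split]]].
  - apply C1_on_is_derive; intros t; unfold sol_x, sol_x'; auto_derive; auto.
    ring.
  - apply C1_on_is_derive; intros t; unfold sol_y, sol_y'; auto_derive; auto.
    ring.
  - intros t Ht. rewrite runmax_sol_x, runmax_sol_y by lra.
    unfold sol_x, sol_x', sol_y, sol_y'. split; ring.
  - unfold sol_x. rewrite exp_0. unfold d. ring.
  - unfold sol_y. ring.
Qed.

End ExplicitSolution.

Theorem mainTheorem3 (x0 y0 : R) (hx0 : 0 < x0) (hy0 : 0 < y0) (hxy : x0 <> y0) :
  forall T : R, 0 < T ->
  exists x x' y y' : R -> R,
    C1_on T x x' /\ C1_on T y y' /\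
    (forall t, 0 <= t <= T ->
       x' t = x t - runmax y t /\ y' t = y t - runmax x t) /\
    x 0 = x0 /\ y 0 = y0.
Proof.
  intros T _.
  destruct (Rle_or_lt y0 x0) as [Hyx | Hxy].
  - exists (sol_x x0 y0), (sol_x' x0 y0), (sol_y x0 y0), (sol_y' x0 y0).
    apply is_solution_explicit, Hyx.
  - exists (sol_y y0 x0), (sol_y' y0 x0), (sol_x y0 x0), (sol_x' y0 x0).
    apply is_solution_swap, is_solution_explicit. lra.
Qed.
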